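(* Let $d\ge2$, $n\ge2$ and let $v=v_1\cdots v_n\in\mathcal{L}(n,d)$. Consider the unfoldings of all billiard trajectories in $[0,1]^d$ which are coded by $v$ and start inside the cube $[0,1]^d$. Then for every $i$ with $2\le i\le n$, there is only one face of the tessellation that corresponds to the letter $v_i$, i.e. all these unfolded trajectories cross the same $(d-1)$-dimensional face of the tessellation at their $i$-th letter.
   Context: Billiard in the hypercube $[0,1]^d$, coded by $d$ letters: the two parallel $(d-1)$-faces orthogonal to the $i$-th coordinate axis get letter $i$; $\mathcal{L}(n,d)$ is the set of codes of length $n$ of billiard orbit segments. Unfolding: instead of reflecting a trajectory one reflects the cube, so the trajectory becomes a straight line in $\mathbb{R}^d$ tiled by the unit cubes $k+[0,1]^d$, $k\in\mathbb{Z}^d$, and each crossing of a $(d-1)$-face of this tessellation orthogonal to the $i$-th axis contributes the letter $i$. *)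

From mathcomp Require Import all_boot all_order all_algebra.
From mathcomp Require Import reals.
Set Implicit Arguments. Unset Strict Implicit. Unset Printing Implicit Defensive.
Import Order.TTheory GRing.Theory Num.Theory.
Local Open Scope ring_scope.

Section Billiard.
Variables (R : realType) (d n : nat).

(* Letters are 0-based: 'I_d = {0,...,d-1} stands for {1,...,d}.
   Positions in a word of length n are 'I_n (0-based).  *)

(* Unfolded trajectory: the straight line t |-> p + t * th in R^d. *)
Definition upt (p th : 'I_d -> R) (t : R) : 'I_d -> R :=
  fun j => p j + t * th j.

(* At time t the unfolded line lies on a hyperplane x_j \in Z of the
   tessellation by unit cubes k + [0,1]^d. *)
Definition on_wall (p th : 'I_d -> R) (t : R) (j : 'I_d) : Prop :=
  upt p th t j \is a Num.int.

(* The orbit segment starting at time 0 from p, with direction th, has as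
   code v (a word of length n): ts i are the times (> 0, increasing) of
   its first n crossings of walls of the tessellation; at time ts i the
   line crosses only a wall orthogonal to axis v i (non-singular crossing),
   and there is no other crossing before ts (last). *)
Definition coded_by (p th : 'I_d -> R) (v : 'I_n -> 'I_d) (ts : 'I_n -> R)
  : Prop :=
  [/\ (forall i, 0 < ts i),
      (forall i j : 'I_n, (i < j)%N -> ts i < ts j),
      (forall i l, on_wall p th (ts i) l <-> l = v i) &
      (forall t, 0 < t -> (exists l, on_wall p th t l) ->
         (exists i, t = ts i) \/ (forall i, ts i < t))].

Definition in_L (v : 'I_n -> 'I_d) : Prop :=
  exists (p th : 'I_d -> R) (ts : 'I_n -> R),
    (forall j, 0 <= p j <= 1) /\ coded_by p th v ts.

Definition tess_face (j : 'I_d) (k : int) (m : 'I_d -> int) (x : 'I_d -> R)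
  : Prop :=
  x j = k%:~R /\ (forall l, l != j -> (m l)%:~R <= x l <= (m l + 1)%:~R).

End Billiard.

From mathcomp Require Import all_boot all_order all_algebra.
From mathcomp Require Import reals zify lra.
Set Implicit Arguments. Unset Strict Implicit. Unset Printing Implicit Defensive.
Import Order.TTheory GRing.Theory Num.Theory.
Local Open Scope ring_scope.

(* Since the start point lies in the open unit cube and every coordinate of
   the direction is nonnegative, each coordinate x_l of the unfolded line is
   nondecreasing and starts in (0, 1). It becomes an integer exactly at the
   crossings coded by the letter l, and between two crossings it meets no
   integer, so each such crossing raises its integer part by one. Hence at
   the i-th crossing x_l lies in [c_l, c_l + 1), where c_l is the number of
   occurrences of l in v_1 ... v_i; this depends on v only, and the crossed
   face is the one in the hyperplane x_{v_i} = c_{v_i} over the cell with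
   corner (c_l)_l. *)

Section IntegerPoints.
Variable R : realType.

Lemma int_in_unit_interval (x : R) (C : int) :
  x \is a Num.int -> C%:~R <= x < C%:~R + 1 -> x = C%:~R.
Proof.
move=> /intrP[z ->] /andP[h0 h1].
have hCz : (C <= z)%R by rewrite -(ler_int R).
have hzC : (z < C + 1)%R by rewrite -(ltr_int R) intrD.
by have -> : z = C by lia.
Qed.

Lemma not_int_open01 (x : R) : 0 < x < 1 -> x \isn't a Num.int.
Proof.
move=> /andP[h0 h1]; apply/negP => /intrP[z ez]; subst x.
have z_gt0 : (0 < z)%R by rewrite -(ltr_int R).
have z_lt1 : (z < 1)%R by rewrite -(ltr_int R).
lia.
Qed.

Section Step.
Variables (x0 x1 : R) (C : nat).
Hypothesis no_int_between : forall k : int, ~ (x0 < k%:~R < x1).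
Hypothesis x0_in : C%:R <= x0 < C%:R + 1.

Lemma int_step_next : x0 < x1 -> x1 \is a Num.int -> x1 = C.+1%:R.
Proof.
move=> h01 /intrP[z ez]; have /andP[hC0 h0C] := x0_in; subst x1.
have hCz : (C%:Z < z)%R by rewrite -(ltr_int R); apply: le_lt_trans h01.
have hzC : (z <= C%:Z + 1)%R.
  rewrite leNgt; apply/negP => hz; apply: (@no_int_between (C%:Z + 1)).
  by rewrite intrD h0C /= -intrD ltr_int.
by have -> : z = C.+1 by lia.
Qed.

Lemma nonint_step_stays :
  x0 <= x1 -> x1 \isn't a Num.int -> C%:R <= x1 < C%:R + 1.
Proof.
move=> h01 x1_nint; have /andP[hC0 h0C] := x0_in.
rewrite (le_trans hC0 h01) /= ltNge; apply/negP => hx1.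
have hne : x1 != C%:R + 1.
  by apply: contraNneq x1_nint => ->; rewrite natr1 natr_int.
apply: (@no_int_between (C%:Z + 1)); rewrite intrD h0C /=.
by rewrite lt_neqAle eq_sym hne.
Qed.

End Step.

Lemma affine_ivt (p th a b y : R) : 0 <= th -> a < b ->
  p + a * th < y < p + b * th -> exists2 t, a < t < b & p + t * th = y.
Proof.
move=> th_ge0 hab /andP[ha hb].
have th_gt0 : 0 < th by nra.
have th_neq0 : th != 0 by rewrite gt_eqF.
exists ((y - p) / th); last by rewrite mulfVK // addrC subrK.
by rewrite !ltr_pdivlMr // !ltr_pdivrMr //; lra.
Qed.

End IntegerPoints.

Lemma big_ord_leq_split m (F : 'I_m -> nat) (j : 'I_m) :
  (\sum_(j' < m | (j' <= j)%N) F j' = F j + \sum_(j' < m | (j' < j)%N) F j')%N.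
Proof.
rewrite (bigD1 j) //=; congr (_ + _)%N; apply: eq_bigl => j'.
by rewrite ltn_neqAle andbC -val_eqE.
Qed.

Section Unfolding.
Variables (R : realType) (d n : nat) (v : 'I_n -> 'I_d).

Definition letter_count (i : nat) (l : 'I_d) : nat :=
  (\sum_(j < n | (j <= i)%N) (v j == l))%N.

Variables (p th : 'I_d -> R) (ts : 'I_n -> R).
Hypothesis p_in : forall j, 0 < p j < 1.
Hypothesis th_ge0 : forall j, 0 <= th j.
Hypothesis coded : coded_by p th v ts.

Lemma coded_ts_ltn (a b : 'I_n) : ts a < ts b -> (a < b)%N.
Proof.
case: coded => _ ts_lt _ _ hab; rewrite ltnNge; apply/negP.
rewrite leq_eqVlt => /orP[/eqP/val_inj eba | hba].
  by move: hab; rewrite eba ltxx.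
by move: (ts_lt _ _ hba); rewrite ltNge (ltW hab).
Qed.

Lemma no_wall_before_first (j : 'I_n) t :
  0 < t < ts j -> (j = 0 :> nat) -> ~ exists l, on_wall p th t l.
Proof.
case: coded => _ _ _ first_crossings /andP[t_gt0 t_lt] j0 hw.
case: (first_crossings t t_gt0 hw) => [[k ek] | hall].
  by subst t; move: (coded_ts_ltn t_lt); rewrite j0.
by move: (hall j); rewrite ltNge (ltW t_lt).
Qed.

Lemma no_wall_between (j j' : 'I_n) t :
  ts j < t < ts j' -> (j' = j.+1 :> nat) -> ~ exists l, on_wall p th t l.
Proof.
case: coded => ts_gt0 _ _ first_crossings /andP[t_gt t_lt] ej' hw.
have t_gt0 : 0 < t by apply: lt_trans t_gt.
case: (first_crossings t t_gt0 hw) => [[k ek] | hall].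
  subst t; move: (coded_ts_ltn t_gt) (coded_ts_ltn t_lt); lia.
by move: (hall j'); rewrite ltNge (ltW t_lt).
Qed.

Lemma crossing_step (a : R) (j : 'I_n) (l : 'I_d) (C : nat) :
  a < ts j -> (forall t, a < t < ts j -> ~ exists l, on_wall p th t l) ->
  C%:R <= upt p th a l < C%:R + 1 ->
  (C + (v j == l))%:R <= upt p th (ts j) l < (C + (v j == l))%:R + 1.
Proof.
move=> a_lt no_wall hC; have [_ _ wall_iff _] := coded.
have move_le : upt p th a l <= upt p th (ts j) l.
  by rewrite /upt lerD2l ler_wpM2r // ltW.
have no_int k : ~ (upt p th a l < k%:~R < upt p th (ts j) l).
  move=> hk; have [t ht htk] := affine_ivt (th_ge0 l) a_lt hk.
  by apply: (no_wall t ht); exists l; rewrite /on_wall /upt htk intr_int.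
have [vjl | vjl] := eqVneq (v j) l; last first.
  rewrite addn0; apply: nonint_step_stays => //.
  by apply/negP => /wall_iff/eqP; rewrite eq_sym (negPf vjl).
have wall_l : on_wall p th (ts j) l by apply/wall_iff.
(* otherwise x_l stays equal to p l, which is not an integer *)
have th_gt0 : 0 < th l.
  rewrite lt_neqAle th_ge0 andbT; apply/negP => /eqP th0.
  move: wall_l; rewrite /on_wall /upt -th0 mulr0 addr0.
  exact/negP/not_int_open01.
have move_lt : upt p th a l < upt p th (ts j) l by rewrite /upt ltrD2l ltr_pM2r.
rewrite addn1 (int_step_next no_int hC move_lt wall_l) lexx /=.
by rewrite ltrDl.
Qed.

Lemma upt_ts_bounds (j : 'I_n) (l : 'I_d) :
  (letter_count j l)%:R <= upt p th (ts j) l < (letter_count j l)%:R + 1.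
Proof.
have [ts_gt0 ts_lt _ _] := coded.
case: j => k hk; elim: k hk => [|k IH] hk.
- have -> : letter_count 0 l = (0 + (v (Ordinal hk) == l))%N.
    by rewrite /letter_count (big_ord_leq_split _ (Ordinal hk)) big_pred0 ?addn0.
  apply: (@crossing_step 0) => //.
    by move=> t ht; apply: (no_wall_before_first ht).
  have /andP[p_gt0 p_lt1] := p_in l.
  by rewrite /upt mul0r addr0 add0r (ltW p_gt0).
- have hk' : (k < n)%N by apply: ltnW.
  have -> : letter_count k.+1 l = (letter_count k l + (v (Ordinal hk) == l))%N.
    by rewrite /letter_count (big_ord_leq_split _ (Ordinal hk)) addnC.
  apply: crossing_step (IH hk'); first exact: ts_lt.
  by move=> t ht; apply: no_wall_between ht _.
Qed.

End Unfolding.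

Theorem mainTheorem10 (R : realType) (d n : nat) (hd : (2 <= d)%N)
  (hn : (2 <= n)%N) (v : 'I_n -> 'I_d) (hv : in_L R v)
  (i : 'I_n) (hi : (1 <= i)%N) :
  exists (k : int) (m : 'I_d -> int),
    forall (p th : 'I_d -> R) (ts : 'I_n -> R),
      (forall j, 0 < p j < 1) ->
      (forall j, 0 <= th j) ->
      coded_by p th v ts ->
      tess_face (v i) k m (upt p th (ts i)).
Proof.
(* The face depends on v and i only. *)
exists (letter_count v i (v i))%:Z, (fun l => (letter_count v i l)%:Z).
move=> p th ts p_in th_ge0 coded.
have bounds := upt_ts_bounds p_in th_ge0 coded i.
have [_ _ wall_iff _] := coded; split.
- apply: (int_in_unit_interval (C := (letter_count v i (v i))%:Z)) (bounds (v i)).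
  exact/wall_iff.
- by move=> l _; have /andP[-> /ltW] := bounds l; rewrite intrD.
Qed.
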